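(* Let $(V_1,\dots,V_n)$ be an $n$-tuple of doubly non-commuting isometries on $H$, let $A=\{i_1,\dots,i_l\}\subseteq\{1,\dots,n\}$ be a (possibly empty) set of $l$ distinct indices, and let $k_{i_1},\dots,k_{i_l}\ge0$. Then $$\big[V_{i_1}^{k_{i_1}}(\mathbf 1-V_{i_1}V_{i_1}^* )V_{i_1}^{*k_{i_1}}\big]\cdots\big[V_{i_l}^{k_{i_l}}(\mathbf 1-V_{i_l}V_{i_l}^* )V_{i_l}^{*k_{i_l}}\big]=\big[V_{i_1}^{k_{i_1}}\cdots V_{i_l}^{k_{i_l}}\big]\big[(\mathbf 1-V_{i_1}V_{i_1}^* )\cdots(\mathbf 1-V_{i_l}V_{i_l}^* )\big]\big[V_{i_l}^{*k_{i_l}}\cdots V_{i_1}^{*k_{i_1}}\big]$$ and $$\big[V_{i_1}^{k_{i_1}}V_{i_1}^{*k_{i_1}}\big]\cdots\big[V_{i_l}^{k_{i_l}}V_{i_l}^{*k_{i_l}}\big]=\big[V_{i_1}^{k_{i_1}}\cdots V_{i_l}^{k_{i_l}}\big]\big[V_{i_l}^{*k_{i_l}}\cdots V_{i_1}^{*k_{i_1}}\big].$$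
   Context: Fix $n\ge1$ and $z_{ij}\in\mathbb T$ ($i\ne j$) with $z_{ji}=\overline{z_{ij}}$; $(V_1,\dots,V_n)$ is doubly non-commuting if the $V_i$ are isometries on $H$ with $V_i^*V_j=\overline{z_{ij}}V_jV_i^*$ for $i\ne j$. $\mathbf 1$ is the identity operator; empty products equal $\mathbf 1$. *)

From mathcomp Require Import all_boot all_order all_algebra.
Set Implicit Arguments. Unset Strict Implicit. Unset Printing Implicit Defensive.
Import Order.TTheory GRing.Theory Num.Theory.
Local Open Scope ring_scope.

Definition opprod (T : Type) (s : seq (T -> T)) : T -> T :=
  foldr (fun f g => f \o g) id s.

Definition inner_product (C : numClosedFieldType) (H : lmodType C)
  (dot : H -> H -> C) : Prop :=
  [/\ forall (a : C) (x y w : H), dot (a *: x + y) w = a * dot x w + dot y w,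
      forall x y : H, dot y x = (dot x y)^*,
      forall x : H, 0 <= dot x x
    & forall x : H, dot x x = 0 -> x = 0].

Definition op_adjoint (C : numClosedFieldType) (H : lmodType C)
  (dot : H -> H -> C) (T S : H -> H) : Prop :=
  forall x y : H, dot (T x) y = dot x (S y).

Definition op_isometry (C : numClosedFieldType) (H : lmodType C)
  (dot : H -> H -> C) (T : H -> H) : Prop :=
  forall x : H, dot (T x) (T x) = dot x x.

Definition doubly_noncommuting (C : numClosedFieldType) (H : lmodType C)
  (n : nat) (z : 'I_n -> 'I_n -> C) (V Vs : 'I_n -> H -> H) : Prop :=
  forall i j : 'I_n, i != j -> forall x : H,
    Vs i (V j x) = (z i j)^* *: V j (Vs i x).

(* For [j <> i] the defect [1 - V i (Vs i)] commutes with [V j] and [Vs j], while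
   [Vs i] passes [V j] and [Vs j] only up to the phases [(z i j)^*] and [z i j].
   These phases cancel in any sandwich [V_t^k Y V_t^{*k}] over indices [t] not
   containing [i], so [Vs i] commutes with such sandwiches when it commutes with
   [Y]. Induction on the list of indices then moves every [V^k] to the left and
   every [V^{*k}] to the right; the second identity is the case where the defects
   are replaced by the identity. *)

From mathcomp Require Import all_boot all_order all_algebra ring.
Import Order.TTheory GRing.Theory Num.Theory.
Local Open Scope ring_scope.
Set Implicit Arguments.
Unset Strict Implicit.

Section Opprod.
Variable T : Type.

Lemma opprod_rcons (s : seq (T -> T)) f x : opprod (rcons s f) x = opprod s (f x).
Proof. by elim: s => //= g s ->. Qed.

Lemma iter_morph (f g : T -> T) n :
  {morph f : x / g x} -> {morph f : x / iter n g x}.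
Proof. by move=> fg; elim: n => // n IH x /=; rewrite fg IH. Qed.

Lemma opprod_morph (I : eqType) (f : T -> T) (F : I -> T -> T) (t : seq I) :
  {in t, forall i, {morph f : x / F i x}} -> {morph f : x / opprod (map F t) x}.
Proof.
elim: t => //= i t IH fF x.
by rewrite fF ?mem_head // IH // => j jt; apply: fF; rewrite inE jt orbT.
Qed.

End Opprod.

Section Twist.
Variables (R : pzSemiRingType) (M : lSemiModType R).

Lemma scalable_iter (g : M -> M) n : scalable g -> scalable (iter n g).
Proof. by move=> sg a; elim: n => // n IH x /=; rewrite IH sg. Qed.

Lemma scalable_opprod (I : Type) (F : I -> M -> M) (t : seq I) :
  (forall i, scalable (F i)) -> scalable (opprod (map F t)).
Proof. by move=> sF a; elim: t => // i t IH x /=; rewrite IH sF. Qed.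

Lemma iter_twist (f g : M -> M) (c : R) n : scalable g ->
  {morph f : x / g x >-> c *: g x} ->
  {morph f : x / iter n g x >-> c ^+ n *: iter n g x}.
Proof.
move=> sg fg; elim: n => [|n IH] x /=; first by rewrite scale1r.
by rewrite fg IH sg scalerA -exprS.
Qed.

Lemma opprod_twist (I : eqType) (f : M -> M) (F : I -> M -> M) (c : I -> R)
    (t : seq I) : (forall i, scalable (F i)) ->
  {in t, forall i, {morph f : x / F i x >-> c i *: F i x}} ->
  {morph f : x / opprod (map F t) x >-> (\prod_(i <- t) c i) *: opprod (map F t) x}.
Proof.
move=> sF; elim: t => [|i t IH] fF x /=; first by rewrite big_nil scale1r.
rewrite fF ?mem_head // IH => [|j jt]; last by apply: fF; rewrite inE jt orbT.
by rewrite sF scalerA big_cons.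
Qed.

End Twist.

Section Factorization.
Variables (R : comPzSemiRingType) (M : lSemiModType R) (I : eqType).
Variables (V Vs B : I -> M -> M) (a b : I -> I -> R) (k : I -> nat).
Hypotheses (scalable_V : forall i, scalable (V i))
  (scalable_Vs : forall i, scalable (Vs i))
  (scalable_B : forall i, scalable (B i)).
Hypotheses (Vs_V : forall i j, i != j -> {morph Vs i : x / V j x >-> a i j *: V j x})
  (Vs_Vs : forall i j, i != j -> {morph Vs i : x / Vs j x >-> b i j *: Vs j x})
  (twistK : forall i j, i != j -> a i j * b i j = 1).
Hypotheses (B_V : forall i j, i != j -> {morph B i : x / V j x})
  (Vs_B : forall i j, i != j -> {morph Vs j : x / B i x}).

Local Notation P t := (opprod [seq iter (k j) (V j) | j <- t]).
Local Notation Q t := (opprod [seq iter (k j) (Vs j) | j <- rev t]).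

(* Crossing [P t] and [Q t], [Vs i] picks up the phases [\prod a i j ^+ k j] and
   [\prod b i j ^+ k j], which cancel by [twistK]. *)
Lemma Vs_sandwich i t (Y : M -> M) : i \notin t -> scalable Y ->
  {morph Vs i : x / Y x} -> {morph Vs i : x / P t (Y (Q t x))}.
Proof.
move=> it sY VsY x.
have ij j : j \in t -> i != j by move=> jt; apply: contraNneq it => ->.
have sV j : scalable (iter (k j) (V j)) by apply: scalable_iter.
have sVs j : scalable (iter (k j) (Vs j)) by apply: scalable_iter.
have VsP : {morph Vs i : y / P t y >-> (\prod_(j <- t) a i j ^+ k j) *: P t y}.
  by apply: opprod_twist => // j jt; exact/iter_twist/Vs_V/ij.
have VsQ : {morph Vs i : y / Q t y >-> (\prod_(j <- t) b i j ^+ k j) *: Q t y}.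
  rewrite -big_rev; apply: opprod_twist => // j.
  by rewrite mem_rev => jt; exact/iter_twist/Vs_Vs/ij.
rewrite VsP VsY VsQ sY (scalable_opprod t sV) scalerA -big_split big1_seq ?scale1r //.
by move=> j /andP[_ jt] /=; rewrite -exprMn twistK ?ij ?expr1n.
Qed.

Lemma opprod_sandwich s : uniq s -> forall x,
  opprod [seq iter (k i) (V i) \o B i \o iter (k i) (Vs i) | i <- s] x
  = (P s \o opprod [seq B i | i <- s] \o Q s) x.
Proof.
elim: s => //= i t IH /andP[it ut] x.
rewrite IH // rev_cons map_rcons opprod_rcons /=.
have VsY : {morph Vs i : x / opprod [seq B j | j <- t] x}.
  by apply: opprod_morph => j jt; apply: Vs_B; apply: contraNneq it => <-.
have VsS : {morph (fun y => P t (opprod [seq B j | j <- t] (Q t y))) : y / Vs i y}.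
  by move=> y; rewrite (Vs_sandwich it (scalable_opprod t scalable_B) VsY).
rewrite -(iter_morph _ VsS).
congr (iter _ (V i) _); apply: opprod_morph => j jt; apply: iter_morph.
by apply: B_V; apply: contraNneq it => ->.
Qed.

End Factorization.

Section InnerProduct.
Variables (C : numClosedFieldType) (H : lmodType C) (dot : H -> H -> C).
Hypothesis dotP : inner_product dot.

Lemma dotC x y : dot y x = (dot x y)^*.
Proof. by case: dotP. Qed.

Lemma dot0l w : dot 0 w = 0.
Proof.
case: dotP => /(_ 1 0 0 w) + _ _ _; rewrite scale1r addr0 mul1r.
by move/(congr1 (fun v => v - dot 0 w)); rewrite addrK subrr.
Qed.

Lemma dotZl a x w : dot (a *: x) w = a * dot x w.
Proof. by case: dotP => /(_ a x 0 w); rewrite addr0 dot0l addr0. Qed.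

Lemma dotDl x y w : dot (x + y) w = dot x w + dot y w.
Proof. by case: dotP => /(_ 1 x y w); rewrite scale1r mul1r. Qed.

Lemma dotBl x y w : dot (x - y) w = dot x w - dot y w.
Proof. by rewrite dotDl -scaleN1r dotZl mulN1r. Qed.

Lemma dotZr a x w : dot w (a *: x) = a^* * dot w x.
Proof. by rewrite dotC dotZl rmorphM /= -dotC. Qed.

Lemma dotDr x y w : dot w (x + y) = dot w x + dot w y.
Proof. by rewrite dotC dotDl rmorphD /= -!dotC. Qed.

Lemma dotBr x y w : dot w (x - y) = dot w x - dot w y.
Proof. by rewrite dotC dotBl rmorphB /= -!dotC. Qed.

Lemma dot_eqr x y : (forall w, dot w x = dot w y) -> x = y.
Proof.
case: dotP => _ _ _ dot_eq0 xy; apply/eqP; rewrite -subr_eq0; apply/eqP.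
by apply: dot_eq0; rewrite dotBr !xy subrr.
Qed.

(* Polarization: the norms of [x + y] and [x + 'i y] determine [dot x y]. *)
Lemma isometry_dot (T : {linear H -> H}) : op_isometry dot T ->
  forall x y, dot (T x) (T y) = dot x y.
Proof.
move=> isoT x y.
set p := dot (T x) (T y); set q := dot (T y) (T x).
have norm_sum c : c^* * (p - dot x y) + c * (q - dot y x) = 0.
  move/eqP: (isoT (x + c *: y)); rewrite -subr_eq0 => /eqP.
  rewrite linearD linearZ !dotDl !dotDr !dotZl !dotZr !isoT => e.
  by rewrite -{}e /p /q; ring.
have := norm_sum 1; have := norm_sum 'i; rewrite conjCi rmorph1 => e2 e1.
have : (p - dot x y) * (2%:R * 'i) = 'i * 0 - 0.
  by rewrite -{1}e1 -e2; ring.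
rewrite mulr0 subr0 => /eqP.
by rewrite !mulf_eq0 pnatr_eq0 (negbTE (@neq0Ci C)) /= orbF subr_eq0 => /eqP.
Qed.

Lemma adjoint_isometryK (T Ts : {linear H -> H}) :
  op_adjoint dot T Ts -> op_isometry dot T -> cancel T Ts.
Proof. by move=> adjT isoT x; apply: dot_eqr => w; rewrite -adjT isometry_dot. Qed.

Section DoublyNoncommuting.
Variables (n : nat) (z : 'I_n -> 'I_n -> C) (V Vs : 'I_n -> {linear H -> H}).
Hypotheses (norm_z : forall i j, i != j -> `|z i j| = 1)
  (z_sym : forall i j, i != j -> z j i = (z i j)^*)
  (adjV : forall i, op_adjoint dot (V i) (Vs i))
  (isoV : forall i, op_isometry dot (V i))
  (dncV : doubly_noncommuting z (fun i => V i : H -> H) (fun i => Vs i : H -> H)).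

Lemma conj_mul_z i j : i != j -> (z i j)^* * z i j = 1.
Proof. by move=> ij; rewrite -normCKC norm_z ?expr1n. Qed.

(* [V i (V j x) - z i j *: V j (V i x)] has norm zero. *)
Lemma V_twist i j : i != j -> {morph V i : x / V j x >-> z i j *: V j x}.
Proof.
move=> ij x; set p := V i (V j x); set q := V j (V i x).
have dot_qp : dot q p = (z i j)^* * dot x x.
  rewrite /q /p adjV dncV 1?eq_sym // (z_sym ij) conjCK.
  by rewrite (adjoint_isometryK (adjV j) (isoV j)) dotZr isoV.
have dot_pq : dot p q = z i j * dot x x.
  by rewrite dotC dot_qp rmorphM /= conjCK -dotC.
case: dotP => _ _ _ /(_ (p - z i j *: q)) dot_eq0; apply/eqP; rewrite -subr_eq0.
apply/eqP/dot_eq0; rewrite !dotBl !dotBr !dotZl !dotZr dot_pq dot_qp !isoV.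
by rewrite subrr subr0 mulrA conj_mul_z // mul1r subrr.
Qed.

Lemma Vs_twist i j : i != j -> {morph Vs i : x / Vs j x >-> z i j *: Vs j x}.
Proof.
move=> ij x; apply: dot_eqr => w; rewrite -!adjV V_twist 1?eq_sym //.
by rewrite dotZl dotZr !adjV z_sym.
Qed.

Local Notation D i := (fun y => y - V i (Vs i y)).

Lemma defect_V i j : i != j -> {morph D i : x / V j x}.
Proof.
move=> ij x /=; rewrite linearB dncV // (linearZZ (V i)) V_twist //.
by rewrite scalerA conj_mul_z // scale1r.
Qed.

Lemma Vs_defect i j : i != j -> {morph Vs j : x / D i x}.
Proof.
move=> ij x /=; have ji : j != i by rewrite eq_sym.
by rewrite linearB dncV // Vs_twist // (linearZZ (V i)) scalerA conj_mul_z // scale1r.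
Qed.

End DoublyNoncommuting.

End InnerProduct.

Theorem lemma3p3 (C : numClosedFieldType) (H : lmodType C)
  (dot : H -> H -> C) (n : nat) (z : 'I_n -> 'I_n -> C)
  (V Vs : 'I_n -> {linear H -> H}) (s : seq 'I_n) (k : 'I_n -> nat) :
  inner_product dot ->
  (forall i j : 'I_n, i != j -> `|z i j| = 1) ->
  (forall i j : 'I_n, i != j -> z j i = (z i j)^*) ->
  (forall i : 'I_n, op_adjoint dot (V i) (Vs i)) ->
  (forall i : 'I_n, op_isometry dot (V i)) ->
  doubly_noncommuting z (fun i => V i : H -> H) (fun i => Vs i : H -> H) ->
  uniq s ->
  (forall x : H,
     opprod [seq (iter (k i) (V i) \o (fun y => y - V i (Vs i y))
                   \o iter (k i) (Vs i)) | i <- s] x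
     = (opprod [seq iter (k i) (V i) | i <- s]
        \o opprod [seq (fun y => y - V i (Vs i y)) | i <- s]
        \o opprod [seq iter (k i) (Vs i) | i <- rev s]) x)
  /\
  (forall x : H,
     opprod [seq (iter (k i) (V i) \o iter (k i) (Vs i)) | i <- s] x
     = (opprod [seq iter (k i) (V i) | i <- s]
        \o opprod [seq iter (k i) (Vs i) | i <- rev s]) x).
Proof.
move=> dotP norm_z z_sym adjV isoV dncV uniq_s.
have sV i : scalable (V i) by exact: linearZZ.
have sVs i : scalable (Vs i) by exact: linearZZ.
have twistK := conj_mul_z norm_z.
have Vs_Vs := Vs_twist dotP norm_z z_sym adjV isoV dncV.
have sandwich := opprod_sandwich k sV sVs _ dncV Vs_Vs twistK.
split=> x.
- apply: sandwich => // [i|i j ij y|i j ij y].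
  + by move=> a y; rewrite (linearZZ (Vs i)) (linearZZ (V i)) scalerBr.
  + exact: (defect_V dotP norm_z z_sym adjV isoV dncV).
  + exact: (Vs_defect dotP norm_z z_sym adjV isoV dncV).
- have opprod_id y : opprod [seq id | _ <- s] y = y by elim: (s).
  by rewrite (sandwich (fun _ => id)) //= opprod_id.
Qed.
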